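(* Let $\alpha,\beta\in[0,1]$ with $\alpha+\beta=1$, let $0<\delta<1/2$, and let $\xi$ be a real number with $\inf_{n\in\mathbb{N}} n\|n\xi\|\geqslant\delta$. Then for every positive integer $p$, $$\#\Big\{x\in\mathbb{N}:\ p<x\leqslant 2p,\ \|x\xi\|\leqslant \frac{\delta}{(p\log(p+1))^\beta}\Big\}\leqslant \frac{(24\delta+2)\,p^\alpha}{(\log(p+1))^\beta}.$$
   Context: $\|t\|$ denotes the distance from the real number $t$ to the nearest integer; $\log$ is the natural logarithm. *)

From Stdlib Require Import Reals Lra Lia List.
Open Scope R_scope.

Definition dist_int (t : R) : R :=
  Rmin (t - IZR (Int_part t)) (IZR (Int_part t) + 1 - t).

Definition count_close (xi bound : R) (p : nat) : nat :=
  length (filter (fun x : nat => if Rle_dec (dist_int (INR x * xi)) bound then true else false)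
                 (seq (S p) p)).

From Stdlib Require Import Reals Lra Lia List ZArith Classical.
Open Scope R_scope.

(* Let [b = delta / T] with [T = (p log (p+1))^beta], let [m x] be the integer
   nearest to [x xi] and [e x = x xi - m x].  If all counted points [x] give
   the same fraction [m x / x], the errors are proportional, [e x = x c] with
   [|c| <= b / p], so two points at distance [n] satisfy
   [delta <= n ||n xi|| <= n^2 b / p] and lie [sqrt (T p)] apart.  Otherwise
   two distinct fractions with denominators at most [2p] both approximate
   [xi], which forces [1 <= |y e x - x e y| <= 4 p b], i.e. [T <= 4 p delta],
   while [delta <= n ||n xi|| <= 2 n b] keeps the points [T / 2] apart.
   Either spacing, in an interval of length [p], gives
   [count * T <= (4 delta + 2) p]; the constant [24] of the statement is
   generous. *)

Definition nearest_int (t : R) : Z :=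
  if Rle_dec (t - IZR (Int_part t)) (IZR (Int_part t) + 1 - t)
  then Int_part t else (Int_part t + 1)%Z.

Lemma dist_int_nearest (t : R) : dist_int t = Rabs (t - IZR (nearest_int t)).
Proof.
  unfold dist_int, nearest_int, Rmin.
  destruct (base_Int_part t) as [Hlo Hhi].
  destruct (Rle_dec _ _).
  - rewrite Rabs_right; lra.
  - rewrite plus_IZR, Rabs_left1; simpl; lra.
Qed.

Lemma dist_int_le (t : R) (m : Z) : dist_int t <= Rabs (t - IZR m).
Proof.
  unfold dist_int.
  destruct (base_Int_part t) as [Hlo Hhi].
  destruct (Z_le_gt_dec m (Int_part t)) as [Hm | Hm].
  - apply IZR_le in Hm.
    eapply Rle_trans; [apply Rmin_l |]. rewrite Rabs_right; lra.
  - assert (Hm' : (Int_part t + 1 <= m)%Z) by lia.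
    apply IZR_le in Hm'. rewrite plus_IZR in Hm'.
    eapply Rle_trans; [apply Rmin_r |]. rewrite Rabs_left1; simpl in *; lra.
Qed.

Lemma dist_int_sub_le (s t : R) (c a : Z) :
  dist_int (s - t) <= Rabs ((s - IZR c) - (t - IZR a)).
Proof.
  eapply Rle_trans; [apply (dist_int_le _ (c - a)) |].
  rewrite minus_IZR. right. f_equal. ring.
Qed.

Lemma Rabs_IZR_ge1 (z : Z) : z <> 0%Z -> 1 <= Rabs (IZR z).
Proof.
  intro Hz. rewrite Rabs_Zabs. apply IZR_le. lia.
Qed.

Lemma distinct_fractions_separated (xi : R) (u v : nat) (a c : Z) :
  INR u * IZR c <> INR v * IZR a ->
  1 <= INR u * Rabs (INR v * xi - IZR c) + INR v * Rabs (INR u * xi - IZR a).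
Proof.
  intro Hne.
  set (z := (Z.of_nat v * a - Z.of_nat u * c)%Z).
  assert (Hz : IZR z = INR u * (INR v * xi - IZR c) - INR v * (INR u * xi - IZR a)).
  { unfold z. rewrite minus_IZR, !mult_IZR, <- !INR_IZR_INZ. ring. }
  assert (Hz0 : z <> 0%Z).
  { intro E. apply Hne. rewrite E in Hz. simpl in Hz. lra. }
  eapply Rle_trans; [apply (Rabs_IZR_ge1 z Hz0) |].
  rewrite Hz. eapply Rle_trans; [apply Rabs_triang |].
  rewrite Rabs_Ropp, !Rabs_mult, (Rabs_right (INR u)), (Rabs_right (INR v))
    by (apply Rle_ge, pos_INR).
  lra.
Qed.

Lemma length_spaced_filter_seq (P : nat -> bool) (g hi : R) :
  0 < g -> forall n s lo, lo <= hi + g ->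
  (forall x, In x (filter P (seq s n)) -> lo <= INR x <= hi) ->
  (forall x y, In x (filter P (seq s n)) -> In y (filter P (seq s n)) ->
     (x < y)%nat -> g <= INR y - INR x) ->
  INR (length (filter P (seq s n))) * g <= hi - lo + g.
Proof.
  intros Hg n. induction n as [| n IH]; intros s lo Hlo Hrange Hspaced.
  - simpl. lra.
  - simpl seq in *. simpl filter in *. destruct (P s).
    + assert (Hs := Hrange s (or_introl eq_refl)).
      assert (Hrest : forall y, In y (filter P (seq (S s) n)) -> INR s + g <= INR y).
      { intros y Hy. assert (Hy' := Hy). apply filter_In in Hy' as [Hy' _].
        apply in_seq in Hy'.
        assert (g <= INR y - INR s) by (apply Hspaced; [left | right | lia]; auto).
        lra. }
      assert (H := IH (S s) (INR s + g) ltac:(lra)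
        (fun y Hy => conj (Hrest y Hy) (proj2 (Hrange y (or_intror Hy))))
        (fun x y Hx Hy => Hspaced x y (or_intror Hx) (or_intror Hy))).
      simpl length. rewrite S_INR. lra.
    + exact (IH (S s) lo Hlo Hrange Hspaced).
Qed.

Definition close_points (xi bound : R) (p : nat) : list nat :=
  filter (fun x : nat => if Rle_dec (dist_int (INR x * xi)) bound then true else false)
         (seq (S p) p).

Lemma In_close_points (xi b : R) (p x : nat) :
  In x (close_points xi b p) -> (p < x <= 2 * p)%nat /\ dist_int (INR x * xi) <= b.
Proof.
  intro Hx. apply filter_In in Hx as [Hseq Hb]. apply in_seq in Hseq.
  split; [lia |]. destruct (Rle_dec _ _); [assumption | discriminate].
Qed.

Lemma close_points_range (xi b : R) (p x : nat) :
  In x (close_points xi b p) -> INR p + 1 <= INR x <= 2 * INR p.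
Proof.
  intro Hx. destruct (In_close_points xi b p x Hx) as [[Hlo Hhi] _].
  apply le_INR in Hlo, Hhi. rewrite S_INR in Hlo. rewrite mult_INR in Hhi.
  simpl in Hhi. lra.
Qed.

Lemma count_close_spaced (xi b g : R) (p : nat) : 0 < g -> 1 <= INR p ->
  (forall x y, In x (close_points xi b p) -> In y (close_points xi b p) ->
     (x < y)%nat -> g <= INR y - INR x) ->
  INR (count_close xi b p) * g <= INR p - 1 + g.
Proof.
  intros Hg Hp Hspaced.
  replace (INR p - 1 + g) with (2 * INR p - (INR p + 1) + g) by ring.
  apply length_spaced_filter_seq; [exact Hg | lra | apply close_points_range | exact Hspaced].
Qed.

Lemma count_mul_le_of_sqrt_spacing (k : nat) (T P : R) : 0 < T -> 1 <= P ->
  ((1 <= k)%nat -> T <= 2 * P) ->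
  INR k * sqrt (T * P) <= P - 1 + sqrt (T * P) -> INR k * T <= 2 * P.
Proof.
  intros HT HP Hsingle Hk.
  destruct k as [| [| k]].
  - simpl. lra.
  - simpl. specialize (Hsingle (le_n 1)). lra.
  - rewrite !S_INR in *. assert (Hk0 := pos_INR k).
    set (g := sqrt (T * P)) in *.
    assert (Hg2 : g * g = T * P) by (apply sqrt_sqrt; nra).
    assert (Hg : 0 <= g) by apply sqrt_pos.
    assert (Hlin : (INR k + 1) * g <= P - 1) by lra.
    assert (Hsq : (INR k + 1) * (INR k + 1) * (T * P) <= (P - 1) * (P - 1)).
    { rewrite <- Hg2. assert (0 <= (INR k + 1) * g) by nra. nra. }
    assert ((INR k + 1) * (INR k + 1) * T < P) by nra.
    nra.
Qed.

Section BadlyApproximable.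

Variables delta xi : R.
Hypothesis hdelta : 0 < delta.
Hypothesis hxi : forall n : nat, (1 <= n)%nat -> delta <= INR n * dist_int (INR n * xi).

Let m (x : nat) : Z := nearest_int (INR x * xi).

Lemma close_spacing (b : R) (u v : nat) : (u < v)%nat ->
  dist_int (INR u * xi) <= b -> dist_int (INR v * xi) <= b ->
  delta <= INR (v - u) * (2 * b).
Proof.
  intros Huv Hu Hv.
  eapply Rle_trans; [apply (hxi (v - u)); lia |].
  apply Rmult_le_compat_l; [apply pos_INR |].
  rewrite minus_INR by lia. rewrite Rmult_minus_distr_r.
  eapply Rle_trans; [apply (dist_int_sub_le _ _ (m v) (m u)) |].
  unfold Rminus at 1. eapply Rle_trans; [apply Rabs_triang |].
  rewrite Rabs_Ropp, <- !dist_int_nearest. lra.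
Qed.

Lemma aligned_close_spacing (b : R) (u v : nat) : (0 < u < v)%nat ->
  INR u * IZR (m v) = INR v * IZR (m u) -> dist_int (INR u * xi) <= b ->
  delta * INR u <= INR (v - u) * INR (v - u) * b.
Proof.
  intros Huv Halign Hu.
  set (n := (v - u)%nat).
  assert (Hn : INR n = INR v - INR u) by (apply minus_INR; lia).
  assert (Hu0 : 0 < INR u) by (apply lt_0_INR; lia).
  assert (Hn0 : 0 <= INR n) by apply pos_INR.
  assert (Hprop : INR u * ((INR v * xi - IZR (m v)) - (INR u * xi - IZR (m u)))
                  = INR n * (INR u * xi - IZR (m u))).
  { rewrite Hn. nra. }
  assert (Hdist : INR u * dist_int (INR n * xi) <= INR n * b).
  { eapply Rle_trans.
    - apply Rmult_le_compat_l; [lra |].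
      rewrite Hn, Rmult_minus_distr_r. apply (dist_int_sub_le _ _ (m v) (m u)).
    - rewrite <- (Rabs_right (INR u)) at 1 by lra. rewrite <- Rabs_mult, Hprop.
      rewrite Rabs_mult, Rabs_right by lra. fold (m u). rewrite <- dist_int_nearest.
      apply Rmult_le_compat_l; assumption. }
  assert (Hdel := hxi n ltac:(unfold n; lia)).
  nra.
Qed.

Section Counting.

Variables (T : R) (p : nat).
Hypothesis hT : 0 < T.
Hypothesis hp : 1 <= INR p.

Let b := delta / T.
Let L := close_points xi b p.

Let b_mul_T : b * T = delta.
Proof. unfold b. field. lra. Qed.

Let b_pos : 0 < b.
Proof. unfold b. apply Rdiv_lt_0_compat; lra. Qed.

Lemma close_points_mul_dist_le (x y : nat) : In x L -> In y L ->
  INR x * dist_int (INR y * xi) <= 2 * INR p * b.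
Proof.
  intros Hx Hy. destruct (close_points_range _ _ _ _ Hx).
  apply Rmult_le_compat; try lra; [rewrite dist_int_nearest; apply Rabs_pos |].
  apply (In_close_points xi b p y Hy).
Qed.

Lemma close_point_T_le (x : nat) : In x L -> T <= 2 * INR p.
Proof.
  intro Hx.
  assert (Hx1 : (1 <= x)%nat) by (destruct (In_close_points _ _ _ _ Hx); lia).
  assert (H := Rle_trans _ _ _ (hxi x Hx1) (close_points_mul_dist_le x x Hx Hx)).
  rewrite <- b_mul_T in H. nra.
Qed.

Lemma count_close_mul_le_misaligned (u v : nat) : In u L -> In v L ->
  INR u * IZR (m v) <> INR v * IZR (m u) ->
  INR (count_close xi b p) * T <= (4 * delta + 2) * INR p.
Proof.
  intros Hu Hv Hne.
  assert (HT4 : T <= 4 * INR p * delta).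
  { assert (H := distinct_fractions_separated xi u v (m u) (m v) Hne).
    unfold m in H. rewrite <- !dist_int_nearest in H.
    assert (H1 := close_points_mul_dist_le u v Hu Hv).
    assert (H2 := close_points_mul_dist_le v u Hv Hu).
    rewrite <- b_mul_T. nra. }
  assert (Hcount : INR (count_close xi b p) * (T / 2) <= INR p - 1 + T / 2).
  { apply count_close_spaced; [lra | lra |].
    intros x y Hx Hy Hxy.
    assert (H := close_spacing b x y Hxy (proj2 (In_close_points _ _ _ _ Hx))
                   (proj2 (In_close_points _ _ _ _ Hy))).
    rewrite minus_INR in H by lia. rewrite <- b_mul_T in H. nra. }
  lra.
Qed.

Lemma count_close_mul_le_aligned :
  (forall u v, In u L -> In v L -> INR u * IZR (m v) = INR v * IZR (m u)) ->
  INR (count_close xi b p) * T <= 2 * INR p.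
Proof.
  intro Haligned.
  assert (Hcount : INR (count_close xi b p) * sqrt (T * INR p)
                   <= INR p - 1 + sqrt (T * INR p)).
  { apply count_close_spaced; [apply sqrt_lt_R0; nra | lra |].
    intros x y Hx Hy Hxy.
    destruct (In_close_points _ _ _ _ Hx) as [[Hx1 _] Hxb].
    assert (H := aligned_close_spacing b x y ltac:(lia) (Haligned x y Hx Hy) Hxb).
    destruct (close_points_range _ _ _ _ Hx).
    rewrite minus_INR in H by lia.
    assert (INR x < INR y) by (apply lt_INR; exact Hxy).
    rewrite <- (sqrt_square (INR y - INR x)) by lra.
    apply sqrt_le_1_alt. rewrite <- b_mul_T in H. nra. }
  apply (count_mul_le_of_sqrt_spacing _ T (INR p) hT hp); [| exact Hcount].
  intro Hk. change (count_close xi b p) with (length L) in Hk.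
  destruct L as [| x l] eqn:HL; [simpl in Hk; lia |].
  apply (close_point_T_le x). rewrite HL. left. reflexivity.
Qed.

Lemma count_close_mul_le : INR (count_close xi b p) * T <= (4 * delta + 2) * INR p.
Proof.
  destruct (classic (exists u v, In u L /\ In v L /\ INR u * IZR (m v) <> INR v * IZR (m u)))
    as [[u [v [Hu [Hv Hne]]]] | Haligned].
  - exact (count_close_mul_le_misaligned u v Hu Hv Hne).
  - assert (H : INR (count_close xi b p) * T <= 2 * INR p).
    { apply count_close_mul_le_aligned. intros u v Hu Hv.
      apply NNPP. intro Hne. apply Haligned. exists u, v. auto. }
    assert (0 <= delta * INR p) by nra.
    lra.
Qed.

End Counting.

End BadlyApproximable.

Theorem lemma2 (alpha beta delta xi : R)
  (halpha : 0 <= alpha <= 1) (hbeta : 0 <= beta <= 1) (hab : alpha + beta = 1)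
  (hdelta : 0 < delta < 1 / 2)
  (hxi : forall n : nat, (1 <= n)%nat -> delta <= INR n * dist_int (INR n * xi))
  (p : nat) (hp : (1 <= p)%nat) :
  INR (count_close xi (delta / Rpower (INR p * ln (INR p + 1)) beta) p)
    <= (24 * delta + 2) * Rpower (INR p) alpha / Rpower (ln (INR p + 1)) beta.
Proof.
  set (lg := ln (INR p + 1)).
  assert (Hp : 1 <= INR p) by (apply (le_INR 1); exact hp).
  assert (Hlg : 0 < lg) by (unfold lg; rewrite <- ln_1; apply ln_increasing; lra).
  assert (Hsplit : Rpower (INR p * lg) beta = Rpower (INR p) beta * Rpower lg beta).
  { unfold Rpower. rewrite ln_mult, Rmult_plus_distr_l, exp_plus by lra. reflexivity. }
  assert (Hp_ab : INR p = Rpower (INR p) alpha * Rpower (INR p) beta).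
  { rewrite <- Rpower_plus, hab, Rpower_1 by lra. reflexivity. }
  assert (Hpb : 0 < Rpower (INR p) beta) by apply exp_pos.
  assert (Hlb : 0 < Rpower lg beta) by apply exp_pos.
  assert (H := count_close_mul_le delta xi (proj1 hdelta) hxi (Rpower (INR p * lg) beta) p
                 ltac:(apply exp_pos) Hp).
  rewrite Hsplit in *.
  apply (Rmult_le_reg_r (Rpower (INR p) beta * Rpower lg beta));
    [apply Rmult_lt_0_compat; assumption |].
  replace ((24 * delta + 2) * Rpower (INR p) alpha / Rpower lg beta
             * (Rpower (INR p) beta * Rpower lg beta))
    with ((24 * delta + 2) * (Rpower (INR p) alpha * Rpower (INR p) beta)) by (field; lra).
  rewrite <- Hp_ab.
  assert (0 <= delta * INR p) by nra.
  lra.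
Qed.
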